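(* In the continuous Donation Game, let $\gamma\in\mathbb{R}$. Suppose there exist a bounded measurable $\psi:[0,K]\to\mathbb{R}$, a probability measure $\sigma_X^0$ on $[0,K]$ and a Markov kernel $\sigma_X[x,y]$ from $[0,K]^2$ to $[0,K]$ such that for all $x,y\in[0,K]$, $$u_Y(x,y)-\gamma=\psi(x)-\lambda\int\psi(s)\,d\sigma_X[x,y](s)-(1-\lambda)\int\psi(s)\,d\sigma_X^0(s).$$ Then $0\le\gamma\le b(K)-c(K)$.
   Context: Continuous Donation Game: fix $K>0$ and measurable nondecreasing functions $b,c:[0,K]\to\mathbb{R}$ with $b(0)=c(0)=0$ and $b(s)>c(s)$ for $s>0$. Action spaces $S_X=S_Y=[0,K]$, payoffs $u_X(x,y)=b(y)-c(x)$, $u_Y(x,y)=b(x)-c(y)$, discount factor $\lambda\in(0,1)$. *)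

From Stdlib Require Import Reals Lra List Classical ClassicalEpsilon.
Open Scope R_scope.

Definition sigma_algebra {T : Type} (S : (T -> Prop) -> Prop) : Prop :=
  S (fun _ => True) /\
  (forall A, S A -> S (fun x => ~ A x)) /\
  (forall F : nat -> T -> Prop, (forall n, S (F n)) -> S (fun x => exists n, F n x)).

Definition generated {T : Type} (G : (T -> Prop) -> Prop) (A : T -> Prop) : Prop :=
  forall S, sigma_algebra S -> (forall B, G B -> S B) -> S A.

Definition borelR : (R -> Prop) -> Prop :=
  generated (fun B => exists a b, forall x, B x <-> a < x < b).

Definition borelR2 : (R * R -> Prop) -> Prop :=
  generated (fun B => exists a b c d,
     forall p, B p <-> (a < fst p < b /\ c < snd p < d)).

Definition inI (K x : R) : Prop := 0 <= x <= K.

Definition measurable_on (K : R) (f : R -> R) : Prop :=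
  forall a : R, borelR (fun x => inI K x /\ f x <= a).

Definition measurable2_on (K : R) (g : R -> R -> R) : Prop :=
  forall a : R, borelR2 (fun p => inI K (fst p) /\ inI K (snd p) /\ g (fst p) (snd p) <= a).

Definition bounded_on (K : R) (f : R -> R) : Prop :=
  exists M, forall x, inI K x -> Rabs (f x) <= M.

(** * Probability measures on [0,K]
   Represented as a Borel probability measure on R concentrated on [0,K]
   (values on non-Borel sets are irrelevant). *)
Definition pairwise_disjoint {T : Type} (F : nat -> T -> Prop) : Prop :=
  forall n m, n <> m -> forall x, F n x -> F m x -> False.

Definition is_prob_measure (K : R) (mu : (R -> Prop) -> R) : Prop :=
  (forall A, borelR A -> 0 <= mu A) /\
  (forall F : nat -> R -> Prop, (forall n, borelR (F n)) -> pairwise_disjoint F ->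
      infinite_sum (fun n => mu (F n)) (mu (fun x => exists n, F n x))) /\
  mu (fun _ => True) = 1 /\
  mu (fun x => inI K x) = 1.

Definition is_markov_kernel (K : R) (sigma : R -> R -> (R -> Prop) -> R) : Prop :=
  (forall x y, inI K x -> inI K y -> is_prob_measure K (sigma x y)) /\
  (forall A, borelR A -> measurable2_on K (fun x y => sigma x y A)).

Definition indic (A : R -> Prop) (x : R) : R :=
  if excluded_middle_informative (A x) then 1 else 0.

Definition simple_eval (s : list (R * (R -> Prop))) (x : R) : R :=
  fold_right (fun p acc => fst p * indic (snd p) x + acc) 0 s.

Definition simple_int (mu : (R -> Prop) -> R) (s : list (R * (R -> Prop))) : R :=
  fold_right (fun p acc => fst p * mu (snd p) + acc) 0 s.

Definition lower_sums (K : R) (mu : (R -> Prop) -> R) (f : R -> R) (r : R) : Prop :=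
  exists s, Forall (fun p => borelR (snd p)) s /\
            (forall x, inI K x -> simple_eval s x <= f x) /\
            r = simple_int mu s.

Definition is_integral (K : R) (mu : (R -> Prop) -> R) (f : R -> R) (I : R) : Prop :=
  is_lub (lower_sums K mu f) I.

Definition uX (b c : R -> R) (x y : R) : R := b y - c x.
Definition uY (b c : R -> R) (x y : R) : R := b x - c y.

Definition donation_game (K : R) (b c : R -> R) : Prop :=
  0 < K /\
  measurable_on K b /\ measurable_on K c /\
  (forall s t, 0 <= s -> s <= t -> t <= K -> b s <= b t) /\
  (forall s t, 0 <= s -> s <= t -> t <= K -> c s <= c t) /\
  b 0 = 0 /\ c 0 = 0 /\
  (forall s, 0 < s <= K -> c s < b s).

(* Let M and m be the supremum and infimum of psi on [0,K].  Integrating psi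
   against any probability measure on [0,K] gives a value in [m, M].  With
   y = 0 the identity reads psi x = b x - gamma + lam I + (1 - lam) I0, and
   b x >= 0, so taking the infimum over x gives
   m >= - gamma + lam m + (1 - lam) m, i.e. gamma >= 0.  Symmetrically, with
   y = K and b x <= b K, taking the supremum gives
   M <= b K - c K - gamma + M. *)
From Stdlib Require Import Reals List Lra Lia Classical ClassicalEpsilon FunctionalExtensionality PropExtensionality.
Open Scope R_scope.

Lemma pred_ext (A B : R -> Prop) : (forall x, A x <-> B x) -> A = B.
Proof. intro H; extensionality x; apply propositional_extensionality; auto. Qed.

Lemma borelR_ext A B : borelR A -> (forall x, A x <-> B x) -> borelR B.
Proof. intros HA H; rewrite <- (pred_ext A B H); exact HA. Qed.

Lemma borelR_sigma_algebra : sigma_algebra borelR.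
Proof.
  split; [|split].
  - intros S HS _; apply HS.
  - intros A HA S HS HG; apply HS, HA; auto.
  - intros F HF S HS HG; apply HS; intro n; apply HF; auto.
Qed.

Lemma borelR_setT : borelR (fun _ => True).
Proof. apply borelR_sigma_algebra. Qed.

Lemma borelR_compl A : borelR A -> borelR (fun x => ~ A x).
Proof. apply borelR_sigma_algebra. Qed.

Lemma borelR_set0 : borelR (fun _ => False).
Proof. apply (borelR_ext _ _ (borelR_compl _ borelR_setT)); tauto. Qed.

Lemma borelR_union A B : borelR A -> borelR B -> borelR (fun x => A x \/ B x).
Proof.
  intros HA HB.
  set (F := fun n : nat => match n with O => A | _ => B end).
  assert (HF : borelR (fun x => exists n, F n x)).
  { apply borelR_sigma_algebra. intros [|n]; simpl; auto. }
  apply (borelR_ext _ _ HF). intro x; split.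
  - intros [[|n] Hn]; simpl in Hn; auto.
  - intros [H|H]; [exists O|exists (S O)]; exact H.
Qed.

Lemma borelR_inter A B : borelR A -> borelR B -> borelR (fun x => A x /\ B x).
Proof.
  intros HA HB.
  apply (borelR_ext _ _ (borelR_compl _ (borelR_union _ _ (borelR_compl _ HA) (borelR_compl _ HB)))).
  intro x; destruct (classic (A x)), (classic (B x)); tauto.
Qed.

Lemma borelR_open_interval a b : borelR (fun x => a < x < b).
Proof. intros S _ HG; apply HG; exists a, b; tauto. Qed.

Lemma borelR_inI K : borelR (inI K).
Proof.
  set (G := fun (n : nat) (x : R) => (- INR n - 1 < x < 0) \/ (K < x < K + INR n + 1)).
  assert (HG : borelR (fun x => ~ exists n, G n x)).
  { apply borelR_compl, borelR_sigma_algebra.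
    intro n; apply borelR_union; apply borelR_open_interval. }
  apply (borelR_ext _ _ HG). intro x; unfold inI, G; split.
  - intros Hout.
    destruct (Rle_dec 0 x) as [H0|H0]; [destruct (Rle_dec x K) as [H1|H1]|].
    + lra.
    + exfalso; apply Hout. destruct (INR_archimed 1 (x - K)) as [n Hn]; [lra|].
      exists n; right; lra.
    + exfalso; apply Hout. destruct (INR_archimed 1 (- x)) as [n Hn]; [lra|].
      exists n; left; lra.
  - intros Hx [n [Hn|Hn]]; lra.
Qed.

Section ProbabilityMeasure.
Variable K : R.
Variable mu : (R -> Prop) -> R.
Hypothesis Hmu : is_prob_measure K mu.

Lemma mu_ext A B : (forall x, A x <-> B x) -> mu A = mu B.
Proof. intro H; rewrite (pred_ext A B H); reflexivity. Qed.

Lemma mu_ge0 A : borelR A -> 0 <= mu A.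
Proof. destruct Hmu as [H _]; auto. Qed.

(* Countable additivity for the constant family of empty sets says that the
   partial sums (n+1) * mu set0 converge to mu set0. *)
Lemma mu_set0 : mu (fun _ => False) = 0.
Proof.
  destruct Hmu as [_ [Hadd _]].
  assert (Hsum := Hadd (fun _ _ => False) (fun _ => borelR_set0) (fun _ _ _ _ h _ => h)).
  simpl in Hsum.
  rewrite (mu_ext (fun _ => exists _ : nat, False) (fun _ => False)) in Hsum
    by (intro x; split; [intros [_ h]; exact h | tauto]).
  set (c := mu (fun _ => False)) in *.
  destruct (Req_dec c 0) as [E|E]; auto. exfalso.
  assert (Hc : 0 < Rabs c) by (apply Rabs_pos_lt; auto).
  destruct (Hsum (Rabs c / 2)) as [N HN]; [lra|].
  assert (h1 := HN N (Nat.le_refl _)).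
  assert (h2 := HN (S N) (Nat.le_succ_diag_r _)).
  rewrite sum_cte in h1, h2. unfold Rdist in h1, h2. rewrite S_INR in h2.
  set (u := INR (S N)) in *.
  replace (c * (u + 1) - c) with ((c * u - c) + c) in h2 by ring.
  set (w := c * u - c) in *.
  split_Rabs; lra.
Qed.

Lemma mu_union_disjoint A B : borelR A -> borelR B -> (forall x, A x -> B x -> False) ->
  mu (fun x => A x \/ B x) = mu A + mu B.
Proof.
  intros HA HB Hdisj.
  destruct Hmu as [_ [Hadd _]].
  set (F := fun n : nat => match n with O => A | S O => B | _ => fun _ => False end).
  assert (HF : forall n, borelR (F n)) by (intros [|[|n]]; simpl; auto using borelR_set0).
  assert (HFdisj : pairwise_disjoint F).
  { intros n m Hnm x h1 h2. destruct n as [|[|n]], m as [|[|m]]; simpl in *;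
      first [ congruence | eauto | contradiction ]. }
  assert (Hsum := Hadd F HF HFdisj).
  rewrite (mu_ext (fun x => exists n, F n x) (fun x => A x \/ B x)) in Hsum.
  2:{ intro x; split.
      - intros [[|[|n]] h]; simpl in h; tauto.
      - intros [h|h]; [exists O|exists (S O)]; exact h. }
  apply (uniqueness_sum (fun n => mu (F n))); auto.
  assert (Hpartial : forall k, sum_f_R0 (fun n => mu (F n)) (S k) = mu A + mu B).
  { induction k as [|k IH]; [reflexivity|].
    rewrite tech5, IH. simpl. rewrite mu_set0. ring. }
  intros eps Heps. exists (S O). intros [|n] Hn; [lia|].
  rewrite Hpartial. unfold Rdist. rewrite Rminus_diag, Rabs_R0; lra.
Qed.

Lemma mu_split A E : borelR E -> borelR A ->
  mu E = mu (fun x => E x /\ A x) + mu (fun x => E x /\ ~ A x).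
Proof.
  intros HE HA. rewrite <- mu_union_disjoint.
  - apply mu_ext. intro x; destruct (classic (A x)); tauto.
  - apply borelR_inter; auto.
  - apply borelR_inter; auto using borelR_compl.
  - intros x h h'; tauto.
Qed.

Lemma mu_eq0_off_inI E : borelR E -> (forall x, inI K x -> E x -> False) -> mu E = 0.
Proof.
  intros HE Hdisj.
  destruct Hmu as [_ [_ [HT HI]]].
  assert (HU : borelR (fun x => E x \/ inI K x)) by (apply borelR_union; auto using borelR_inI).
  assert (hU : mu (fun x => E x \/ inI K x) = mu E + 1).
  { rewrite mu_union_disjoint; auto using borelR_inI.
    - change (mu E + mu (fun x => inI K x) = mu E + 1). rewrite HI; ring.
    - intros x h h'; eauto. }
  assert (hT : mu (fun x => (E x \/ inI K x) \/ ~ (E x \/ inI K x)) = 1).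
  { rewrite <- HT. apply mu_ext. intro x; split; auto. intros _; apply classic. }
  rewrite mu_union_disjoint in hT; auto using borelR_compl.
  assert (h1 := mu_ge0 _ (borelR_compl _ HU)). assert (h2 := mu_ge0 _ HE). lra.
Qed.

Definition mu_restrict (E : R -> Prop) (A : R -> Prop) : R := mu (fun x => A x /\ E x).

Lemma simple_int_restrict_split s E A :
  Forall (fun p => borelR (snd p)) s -> borelR E -> borelR A ->
  simple_int (mu_restrict E) s = simple_int (mu_restrict (fun x => E x /\ A x)) s
                               + simple_int (mu_restrict (fun x => E x /\ ~ A x)) s.
Proof.
  intros Hs HE HA. induction s as [|[a B] s IH]; simpl; [ring|].
  inversion Hs as [|? ? HB Hs']; subst. rewrite IH by auto.
  unfold mu_restrict. rewrite (mu_split A (fun x => B x /\ E x)) by (auto using borelR_inter).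
  rewrite (mu_ext (fun x => (B x /\ E x) /\ A x) (fun x => B x /\ E x /\ A x)) by tauto.
  rewrite (mu_ext (fun x => (B x /\ E x) /\ ~ A x) (fun x => B x /\ E x /\ ~ A x)) by tauto.
  ring.
Qed.

(* Induction on the simple function, splitting E along the set of each new term;
   the pointwise bound is only known on [0,K], so an empty E \cap [0,K] must be
   handled by [mu_eq0_off_inI]. *)
Lemma simple_int_restrict_le s : Forall (fun p => borelR (snd p)) s ->
  forall E t, borelR E ->
  (forall x, inI K x -> E x -> simple_eval s x <= t) ->
  simple_int (mu_restrict E) s <= t * mu E.
Proof.
  induction s as [|[a A] s IH]; intros Hs E t HE Hle; simpl.
  - destruct (Rle_dec 0 t) as [Ht|Ht].
    + assert (h := mu_ge0 _ HE). nra.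
    + rewrite (mu_eq0_off_inI E HE); [lra|].
      intros x hx hE. specialize (Hle x hx hE). simpl in Hle. lra.
  - inversion Hs as [|? ? HA Hs']; subst; simpl in HA.
    rewrite (simple_int_restrict_split s E A), (mu_split A E) by auto.
    assert (hA : simple_int (mu_restrict (fun x => E x /\ A x)) s
                 <= (t - a) * mu (fun x => E x /\ A x)).
    { apply IH; auto using borelR_inter. intros x hx [hE hAx].
      specialize (Hle x hx hE). simpl in Hle. unfold indic in Hle.
      destruct (excluded_middle_informative (A x)); [lra|contradiction]. }
    assert (hnA : simple_int (mu_restrict (fun x => E x /\ ~ A x)) s
                  <= t * mu (fun x => E x /\ ~ A x)).
    { apply IH; auto using borelR_inter, borelR_compl. intros x hx [hE hAx].
      specialize (Hle x hx hE). simpl in Hle. unfold indic in Hle.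
      destruct (excluded_middle_informative (A x)); [contradiction|lra]. }
    assert (hres : mu_restrict E A = mu (fun x => E x /\ A x))
      by (apply mu_ext; tauto).
    rewrite hres. lra.
Qed.

Lemma integral_le f I B : is_integral K mu f I -> (forall x, inI K x -> f x <= B) -> I <= B.
Proof.
  intros [_ Hlub] Hf. apply Hlub. intros r [s [Hs [Hev ->]]].
  assert (Hrestrict : mu_restrict (fun _ => True) = mu).
  { extensionality A. apply mu_ext. tauto. }
  assert (h := simple_int_restrict_le s Hs (fun _ => True) B borelR_setT).
  rewrite Hrestrict in h. destruct Hmu as [_ [_ [HT _]]]. rewrite HT, Rmult_1_r in h.
  apply h. intros x hx _. specialize (Hev x hx); specialize (Hf x hx); lra.
Qed.

Lemma integral_ge f I m : is_integral K mu f I -> (forall x, inI K x -> m <= f x) -> m <= I.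
Proof.
  intros [Hub _] Hf. apply Hub. exists ((m, fun _ => True) :: nil). split; [|split].
  - repeat constructor. exact borelR_setT.
  - intros x hx. simpl. unfold indic.
    destruct (excluded_middle_informative True); [|tauto]. specialize (Hf x hx); lra.
  - destruct Hmu as [_ [_ [HT _]]]. simpl. rewrite HT. ring.
Qed.

End ProbabilityMeasure.

Lemma bounded_on_sup K f : 0 <= K -> bounded_on K f ->
  exists M, (forall x, inI K x -> f x <= M) /\
            (forall B, (forall x, inI K x -> f x <= B) -> M <= B).
Proof.
  intros HK [Mb HMb].
  destruct (completeness (fun v => exists x, inI K x /\ v = f x)) as [M [Hub Hlub]].
  - exists Mb. intros v [x [hx ->]]. specialize (HMb x hx).
    assert (h := Rle_abs (f x)); lra.
  - exists (f 0), 0. split; [unfold inI; lra | reflexivity].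
  - exists M. split.
    + intros x hx; apply Hub; eauto.
    + intros B HB. apply Hlub. intros v [x [hx ->]]; auto.
Qed.

Lemma bounded_on_inf K f : 0 <= K -> bounded_on K f ->
  exists m, (forall x, inI K x -> m <= f x) /\
            (forall B, (forall x, inI K x -> B <= f x) -> B <= m).
Proof.
  intros HK [Mb HMb].
  destruct (bounded_on_sup K (fun x => - f x) HK) as [L [Hub Hlub]].
  { exists Mb. intros x hx. rewrite Rabs_Ropp; auto. }
  exists (- L). split.
  - intros x hx. specialize (Hub x hx). lra.
  - intros B HB. assert (L <= - B) by (apply Hlub; intros x hx; specialize (HB x hx); lra).
    lra.
Qed.

Theorem mainTheorem14 (K : R) (b c : R -> R) (lam gamma : R) :
  donation_game K b c ->
  0 < lam < 1 ->
  (exists (psi : R -> R) (sigma0 : (R -> Prop) -> R)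
          (sigma : R -> R -> (R -> Prop) -> R) (I0 : R),
      bounded_on K psi /\ measurable_on K psi /\
      is_prob_measure K sigma0 /\ is_markov_kernel K sigma /\
      is_integral K sigma0 psi I0 /\
      (forall x y, inI K x -> inI K y ->
         exists I, is_integral K (sigma x y) psi I /\
           uY b c x y - gamma = psi x - lam * I - (1 - lam) * I0)) ->
  0 <= gamma <= b K - c K.
Proof.
  intros [HK [_ [_ [Hb_mono [_ [Hb0 [Hc0 _]]]]]]] Hlam
    [psi [sigma0 [sigma [I0 [Hbdd [_ [Hsigma0 [[Hsigma _] [HI0 Heq]]]]]]]]].
  assert (H0 : inI K 0) by (unfold inI; lra).
  assert (HKK : inI K K) by (unfold inI; lra).
  destruct (bounded_on_sup K psi ltac:(lra) Hbdd) as [M [HM_ub HM_lub]].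
  destruct (bounded_on_inf K psi ltac:(lra) Hbdd) as [m [Hm_lb Hm_glb]].
  assert (HI0m : m <= I0) by exact (integral_ge K sigma0 Hsigma0 psi I0 m HI0 Hm_lb).
  assert (HI0M : I0 <= M) by exact (integral_le K sigma0 Hsigma0 psi I0 M HI0 HM_ub).
  split.
  - assert (Hinf : - gamma + lam * m + (1 - lam) * I0 <= m).
    { apply Hm_glb. intros x hx.
      destruct (Heq x 0 hx H0) as [I [HI HxI]]. unfold uY in HxI.
      assert (hI := integral_ge K (sigma x 0) (Hsigma x 0 hx H0) psi I m HI Hm_lb).
      assert (hb : b 0 <= b x) by (unfold inI in hx; apply Hb_mono; lra).
      nra. }
    nra.
  - assert (Hsup : M <= b K - c K - gamma + lam * M + (1 - lam) * I0).
    { apply HM_lub. intros x hx.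
      destruct (Heq x K hx HKK) as [I [HI HxI]]. unfold uY in HxI.
      assert (hI := integral_le K (sigma x K) (Hsigma x K hx HKK) psi I M HI HM_ub).
      assert (hb : b x <= b K) by (unfold inI in hx; apply Hb_mono; lra).
      nra. }
    nra.
Qed.
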